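(* In the setting described in the context, assume moreover $b\ge1000\log^2n$. Then: 1. $\|\overline s^{-1}\widetilde\delta_s\|_2\le2\epsilon$, $\|\overline x^{-1}\widetilde\delta_x\|_2\le2\epsilon$, $\|\mathbb E[\overline s^{-1}\widehat\delta_s]\|_2\le2\epsilon$, $\|\mathbb E[\overline x^{-1}\widehat\delta_x]\|_2\le2\epsilon$, $\|\overline\mu^{-1}(\widetilde\delta_t-\overline\delta_t)\|_2\le\epsilon_{\mathrm{mp}}\epsilon$, and $\|\overline\mu^{-1}(\overline\delta_t+\widetilde\delta_\Phi)\|_2\le5\epsilon$. 2. For every $i\in[n]$: $\operatorname{Var}[\overline x_i^{-1}\widehat\delta_{x,i}]\le2\epsilon^2/b$ and $\operatorname{Var}[\overline s_i^{-1}\widehat\delta_{s,i}]\le2\epsilon^2/b$. 3. $\|\overline x^{-1}(\overline x-\widetilde x)\|_\infty\le2\epsilon_{\mathrm{mp}}$, $\|\overline s^{-1}(\overline s-\widetilde s)\|_\infty\le2\epsilon_{\mathrm{mp}}$, $\|\overline x^{-1}\widetilde\delta_x\|_\infty\le2\epsilon$, $\|\overline s^{-1}\widetilde\delta_s\|_\infty\le2\epsilon$, and $\|\overline\mu^{-1}\widetilde\delta_\mu\|_\infty\le5\epsilon$. 4. $\|\overline x^{-1}\widehat\delta_x\|_\infty\le3\epsilon$ and $\|\overline s^{-1}\widehat\delta_s\|_\infty\le3\epsilon$ hold with probability $1-1/n^4$.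
   Context: Let $n\ge2$ and $A\in\mathbb{R}^{d\times n}$ have full row rank $d\le n$. Products, quotients, square roots and inverses of vectors are coordinatewise; for $u\in\mathbb{R}^n$, the capital letter $U$ denotes $\operatorname{diag}(u)$. For $u\in\mathbb{R}^n_{>0}$ and $v\in\mathbb{R}^n_{>0}$ (or a scalar $v>0$, identified with $v\mathbf 1$), $u\approx_\gamma v$ means $(1-\gamma)v_i\le u_i\le(1+\gamma)v_i$ for all $i$. Parameters: $\epsilon,\epsilon_{\mathrm{mp}}\in(0,10^{-4})$, $\lambda>\log n$; $\Phi_\lambda(r)=\sum_{i=1}^n\cosh(\lambda r_i)$, with $\nabla\Phi_\lambda(r)=(\lambda\sinh(\lambda r_i))_i$. Let $t>0$, $t^{\mathrm{new}}=(1-\frac{\epsilon}{3\sqrt n})t$. Let $\overline x,\overline s\in\mathbb{R}^n_{>0}$, $\overline w=\overline x/\overline s$, $\overline\mu=\overline x\,\overline s$, $\overline\delta_t=(\frac{t^{\mathrm{new}}}{t}-1)\overline\mu$. Let $\widetilde w,\widetilde\mu\in\mathbb{R}^n_{>0}$ satisfy $\widetilde\mu\approx_{\epsilon_{\mathrm{mp}}}\overline\mu$, $\widetilde w\approx_{\epsilon_{\mathrm{mp}}}\overline w$, and $\overline\mu\approx_{0.1}t$. Define $\widetilde x=\sqrt{\widetilde w\widetilde\mu}$, $\widetilde s=\sqrt{\widetilde\mu/\widetilde w}$, $\widetilde P=\widetilde W^{1/2}A^\top(A\widetilde WA^\top)^{-1}A\widetilde W^{1/2}$, $\widetilde\delta_t=(\frac{t^{\mathrm{new}}}{t}-1)\widetilde\mu$,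 $\widetilde\delta_\Phi=-\frac\epsilon2t^{\mathrm{new}}\frac{\nabla\Phi_\lambda(\widetilde\mu/t-1)}{\|\nabla\Phi_\lambda(\widetilde\mu/t-1)\|_2}$ (the gradient is assumed nonzero), $\widetilde\delta_\mu=\widetilde\delta_t+\widetilde\delta_\Phi$, $\widetilde\delta_x=\widetilde X(\widetilde X\widetilde S)^{-1/2}(I-\widetilde P)(\widetilde X\widetilde S)^{-1/2}\widetilde\delta_\mu$, $\widetilde\delta_s=\widetilde S(\widetilde X\widetilde S)^{-1/2}\widetilde P(\widetilde X\widetilde S)^{-1/2}\widetilde\delta_\mu$. Let $R\in\mathbb{R}^{b\times n}$ be a random subsampled randomized Hadamard transform; it satisfies, for every fixed $h\in\mathbb{R}^n$, every $i$ and every $\delta\in(0,1)$: $\mathbb E[R^\top Rh]=h$, $\mathbb E[(R^\top Rh)_i^2]\le h_i^2+\frac1b\|h\|_2^2$, and $\Pr[|(R^\top Rh)_i-h_i|>\|h\|_2\log(n/\delta)/\sqrt b]\le\delta$. Define $\widehat\delta_x=\widetilde X(\widetilde X\widetilde S)^{-1/2}(I-R^\top R\widetilde P)(\widetilde X\widetilde S)^{-1/2}\widetilde\delta_\mu$ and $\widehat\delta_s=\widetilde S(\widetilde X\widetilde S)^{-1/2}R^\top R\widetilde P(\widetilde X\widetilde S)^{-1/2}\widetilde\delta_\mu$. Expectations, variances and probabilities are over the randomness of $R$; all other quantities are deterministic. *)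

From HB Require Import structures.
From mathcomp Require Import all_boot all_order all_algebra.
From mathcomp Require Import reals sequences exp.
Set Implicit Arguments. Unset Strict Implicit. Unset Printing Implicit Defensive.
Import Order.TTheory GRing.Theory Num.Theory.
Local Open Scope ring_scope.

Section Vec.
Context {R : realType} {n : nat}.
Implicit Types (u v : 'cV[R]_n).

Definition cvmul u v : 'cV[R]_n := \col_i (u i 0 * v i 0).
Definition cvdiv u v : 'cV[R]_n := \col_i (u i 0 / v i 0).
Definition cvinv u : 'cV[R]_n := \col_i (u i 0)^-1.
Definition cvsqrt u : 'cV[R]_n := \col_i Num.sqrt (u i 0).
Definition dg u : 'M[R]_n := diag_mx u^T.
Definition vpos u : Prop := forall i, 0 < u i 0.
Definition approx u (gamma : R) v : Prop :=
  forall i, (1 - gamma) * v i 0 <= u i 0 /\ u i 0 <= (1 + gamma) * v i 0.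
Definition norm2 u : R := Num.sqrt (\sum_i (u i 0) ^+ 2).
Definition norminf u : R := \big[Num.max/0]_i `|u i 0|.
End Vec.

Definition sinh {R : realType} (x : R) : R := (expR x - expR (- x)) / 2.

(* gradient of Phi_lambda(r) = sum_i cosh(lambda r_i) *)
Definition gradPhi {R : realType} {n : nat} (lam : R) (r : 'cV[R]_n) : 'cV[R]_n :=
  \col_i (lam * sinh (lam * r i 0)).

Section Prob.
Context {R : realType} {Omega : finType} (p : Omega -> R).
Definition Ex (f : Omega -> R) : R := \sum_w p w * f w.
Definition Exv {n : nat} (f : Omega -> 'cV[R]_n) : 'cV[R]_n := \sum_w p w *: f w.
Definition Var (f : Omega -> R) : R := Ex (fun w => (f w - Ex f) ^+ 2).
Definition Pr (P : pred Omega) : R := \sum_(w | P w) p w.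
End Prob.

Section Step.
Context {R : realType} {n d : nat} (A : 'M[R]_(d, n)) (eps lam t : R)
        (wt mut : 'cV[R]_n).

Definition tnew : R := (1 - eps / (3 * Num.sqrt n%:R)) * t.
Definition xtil : 'cV[R]_n := cvsqrt (cvmul wt mut).
Definition stil : 'cV[R]_n := cvsqrt (cvdiv mut wt).
Definition Ptil : 'M[R]_n :=
  dg (cvsqrt wt) *m A^T *m invmx (A *m dg wt *m A^T) *m A *m dg (cvsqrt wt).
Definition dtil_t : 'cV[R]_n := (tnew / t - 1) *: mut.
Definition rvec : 'cV[R]_n := \col_i (mut i 0 / t - 1).
Definition dtil_Phi : 'cV[R]_n :=
  (- (eps / 2 * tnew) / norm2 (gradPhi lam rvec)) *: gradPhi lam rvec.
Definition dtil_mu : 'cV[R]_n := dtil_t + dtil_Phi.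
Definition Dhalf : 'M[R]_n := dg (cvinv (cvsqrt (cvmul xtil stil))).
Definition dtil_x : 'cV[R]_n :=
  dg xtil *m Dhalf *m (1%:M - Ptil) *m Dhalf *m dtil_mu.
Definition dtil_s : 'cV[R]_n :=
  dg stil *m Dhalf *m Ptil *m Dhalf *m dtil_mu.
Definition dhat_x {b : nat} (Rm : 'M[R]_(b, n)) : 'cV[R]_n :=
  dg xtil *m Dhalf *m (1%:M - Rm^T *m Rm *m Ptil) *m Dhalf *m dtil_mu.
Definition dhat_s {b : nat} (Rm : 'M[R]_(b, n)) : 'cV[R]_n :=
  dg stil *m Dhalf *m (Rm^T *m Rm *m Ptil) *m Dhalf *m dtil_mu.
End Step.

Definition mubar {R : realType} {n : nat} (xb sb : 'cV[R]_n) := cvmul xb sb.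
Definition wbar {R : realType} {n : nat} (xb sb : 'cV[R]_n) := cvdiv xb sb.
Definition dbar_t {R : realType} {n : nat} (eps t : R) (xb sb : 'cV[R]_n) : 'cV[R]_n :=
  (tnew (n:=n) eps t / t - 1) *: mubar xb sb.

From HB Require Import structures.
From mathcomp Require Import all_boot all_order all_algebra.
From mathcomp Require Import reals sequences exp.
From mathcomp Require Import ring lra.
Import Order.TTheory GRing.Theory Num.Theory.
Local Open Scope ring_scope.

(* Let g = mu~^(-1/2) delta~_mu and P = P~, an orthogonal projection.  Since
   x~ mu~^(-1/2) = sqrt w~ and s~ mu~^(-1/2) = 1 / sqrt w~, the exact steps are
   delta~_x = sqrt w~ (g - P g) and delta~_s = P g / sqrt w~, and the sketched steps
   replace P g by R^T R P g.  As 8/9 t <= mu~ <= 10/9 t, the centering part of delta~_mu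
   contributes (20/81) eps^2 t and the potential part (9/16) eps^2 t to |g|^2, so
   |g|^2 <= 0.81 eps^2 t.  The squared scalings w~ / xbar^2 and 1 / (w~ sbar^2) are at
   most kappa = 6 / (5 t), and kappa |g|^2 <= eps^2 bounds every relative step by eps,
   in norm and coordinatewise.  The sketch is unbiased, so the expected steps are the
   exact ones; its second moment gives variance eps^2 / b; and its tail bound with
   delta = n^-5 (so that ln (n / delta) = 6 ln n <= sqrt b) moves every coordinate of
   P g by at most |P g| outside an event of probability n delta = n^-4. *)

Lemma abs_le_of_sqr_le {R : realType} (x c : R) : 0 <= c -> x ^+ 2 <= c ^+ 2 -> `|x| <= c.
Proof. by move=> c0; rewrite -real_normK ?num_real // ler_sqr ?nnegrE. Qed.

Lemma sqrt_rel_err {R : realType} (X q k : R) : 0 < X -> 0 <= k <= 1 ->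
  (1 - k) ^+ 2 * X ^+ 2 <= q <= (1 + k) ^+ 2 * X ^+ 2 ->
  `|X^-1 * (X - Num.sqrt q)| <= k.
Proof.
move=> X0 /andP[k0 k1] /andP[lb ub].
have sqrt_sq (y : R) : 0 <= y -> Num.sqrt (y ^+ 2 * X ^+ 2) = y * X.
  by move=> y0; rewrite -exprMn sqrtr_sqr ger0_norm // mulr_ge0 // ltW.
have := ler_wsqrtr lb; have := ler_wsqrtr ub.
rewrite !sqrt_sq ?subr_ge0 ?addr_ge0 // => hu hl.
rewrite normrM gtr0_norm ?invr_gt0 // mulrC ler_pdivrMr // ler_norml.
by apply/andP; split; nra.
Qed.

Lemma abs_mulr_perturb_le {R : realType} {a x y T e1 e2 : R} :
  `|a * x| <= e1 -> `|y - x| <= T -> `|a| * T <= e2 -> `|a * y| <= e1 + e2.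
Proof.
move=> ax yx aT; rewrite -[y](subrK x) mulrDr addrC.
apply: le_trans (ler_normD _ _) _; rewrite lerD // normrM.
exact: le_trans (ler_wpM2l (normr_ge0 a) yx) aT.
Qed.

Section SquaredNorm.
Context {R : realType} {n : nat}.
Implicit Types (u v : 'cV[R]_n).

Definition sqnorm v : R := \sum_i (v i 0) ^+ 2.

Lemma sqnorm_ge0 v : 0 <= sqnorm v.
Proof. by apply: sumr_ge0 => i _; apply: sqr_ge0. Qed.

Lemma norm2_sqr v : norm2 v ^+ 2 = sqnorm v.
Proof. exact/sqr_sqrtr/sqnorm_ge0. Qed.

Lemma norm2_le v c : 0 <= c -> sqnorm v <= c ^+ 2 -> norm2 v <= c.
Proof. by move=> c0 hv; rewrite -(ger0_norm c0) -sqrtr_sqr ler_sqrt ?sqr_ge0. Qed.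

Lemma sqr_coord_le_sqnorm v i : (v i 0) ^+ 2 <= sqnorm v.
Proof. by rewrite /sqnorm (bigD1 i) //= lerDl; apply: sumr_ge0 => j _; apply: sqr_ge0. Qed.

Lemma sqnorm_trmx v : sqnorm v = (v^T *m v) 0 0.
Proof. by rewrite /sqnorm mxE; apply: eq_bigr => i _; rewrite !mxE expr2. Qed.

Lemma sqnormZ k v : sqnorm (k *: v) = k ^+ 2 * sqnorm v.
Proof. by rewrite /sqnorm mulr_sumr; apply: eq_bigr => i _; rewrite mxE exprMn. Qed.

Lemma sqnorm_eq0 v : (sqnorm v == 0) = (v == 0).
Proof.
apply/eqP/eqP => [v0 | ->]; last by rewrite /sqnorm big1 // => i _; rewrite mxE expr0n.
apply/matrixP => i j; rewrite (ord1 j) mxE; apply/eqP; rewrite -sqrf_eq0; apply/eqP.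
by move: v0; rewrite /sqnorm => /psumr_eq0P; apply => // k _; apply: sqr_ge0.
Qed.

Lemma sqnorm_normalize a v : v != 0 -> sqnorm ((- a / norm2 v) *: v) = a ^+ 2.
Proof.
rewrite -sqnorm_eq0 => v0.
rewrite sqnormZ exprMn sqrrN exprVn norm2_sqr -mulrA mulVf ?mulr1 //.
Qed.

Lemma sqnorm_le_const {a : R} {v : 'cV[R]_n} :
  (forall i, (v i 0) ^+ 2 <= a) -> sqnorm v <= n%:R * a.
Proof.
move=> hv; apply: le_trans (ler_sum _ (fun i _ => hv i)) _.
by rewrite sumr_const card_ord mulr_natl.
Qed.

Lemma sqnorm_le_sum {a k : R} {u v : 'cV[R]_n} :
  (forall i, (v i 0) ^+ 2 <= a + k * (u i 0) ^+ 2) -> sqnorm v <= n%:R * a + k * sqnorm u.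
Proof.
move=> hv; apply: le_trans (ler_sum _ (fun i _ => hv i)) _.
by rewrite big_split /= sumr_const card_ord mulr_natl /sqnorm mulr_sumr.
Qed.

Lemma sqnorm_cvmul_le (a v : 'cV[R]_n) {c : R} :
  (forall i, (a i 0) ^+ 2 <= c) -> sqnorm (cvmul a v) <= c * sqnorm v.
Proof.
move=> ha; rewrite /sqnorm mulr_sumr; apply: ler_sum => i _.
by rewrite mxE exprMn ler_wpM2r ?sqr_ge0.
Qed.

Lemma norminf_le v c : 0 <= c -> (forall i, `|v i 0| <= c) -> norminf v <= c.
Proof. by move=> c0 hv; apply: bigmax_le. Qed.

Lemma sqnorm_proj (P : 'M[R]_n) g : P^T = P -> P *m P = P ->
  sqnorm g = sqnorm (P *m g) + sqnorm (g - P *m g).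
Proof.
move=> PT PP; set h := P *m g.
have orth : h^T *m (g - h) = 0.
  by rewrite trmx_mul PT -mulmxA mulmxBr mulmxA PP subrr mulmx0.
have orth' : (g - h)^T *m h = 0 by rewrite -[LHS]trmxK trmx_mul trmxK orth trmx0.
rewrite !sqnorm_trmx.
have -> : g^T *m g = (h + (g - h))^T *m (h + (g - h)) by rewrite addrC subrK.
rewrite [(h + _)^T]raddfD /= mulmxDl [h^T *m _]mulmxDr [(g - h)^T *m _]mulmxDr.
by rewrite orth orth' addr0 add0r mxE.
Qed.

Lemma sqnorm_proj_le (P : 'M[R]_n) g : P^T = P -> P *m P = P ->
  sqnorm (P *m g) <= sqnorm g /\ sqnorm (g - P *m g) <= sqnorm g.
Proof.
move=> PT PP; rewrite [sqnorm g](sqnorm_proj P g PT PP).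
by rewrite lerDl lerDr !sqnorm_ge0.
Qed.

End SquaredNorm.

Section ScaledVectors.
Context {R : realType} {n : nat} {a g : 'cV[R]_n} {kappa eps : R}.
Hypotheses (a_le : forall i, (a i 0) ^+ 2 <= kappa) (kappa_ge0 : 0 <= kappa)
  (kappa_g : kappa * sqnorm g <= eps ^+ 2) (eps_ge0 : 0 <= eps).
Implicit Types (v : 'cV[R]_n) (i : 'I_n).

Lemma scale_sqnorm_le {v} i : sqnorm v <= sqnorm g -> (a i 0) ^+ 2 * sqnorm v <= eps ^+ 2.
Proof.
move=> hv; apply: le_trans kappa_g.
by apply: ler_pM => //; [apply: sqr_ge0 | apply: sqnorm_ge0].
Qed.

Lemma abs_scale_coord_le {v} i : sqnorm v <= sqnorm g -> `|a i 0 * v i 0| <= eps.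
Proof.
move=> hv; apply: abs_le_of_sqr_le => //; apply: le_trans (scale_sqnorm_le i hv).
by rewrite exprMn ler_wpM2l ?sqr_ge0 ?sqr_coord_le_sqnorm.
Qed.

Lemma abs_scale_norm2_le {v} i : sqnorm v <= sqnorm g -> `|a i 0| * norm2 v <= eps.
Proof.
move=> hv; rewrite -[norm2 v]ger0_norm ?sqrtr_ge0 // -normrM.
by apply: abs_le_of_sqr_le => //; rewrite exprMn norm2_sqr (scale_sqnorm_le i hv).
Qed.

Lemma norm2_cvmul_le {v} : sqnorm v <= sqnorm g -> norm2 (cvmul a v) <= eps.
Proof.
move=> hv; apply: norm2_le => //; apply: le_trans (sqnorm_cvmul_le a v a_le) _.
exact: le_trans (ler_wpM2l kappa_ge0 hv) kappa_g.
Qed.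

End ScaledVectors.

Section DiagonalScaling.
Context {R : realType} {n : nat}.
Implicit Types (u v w : 'cV[R]_n).

Lemma cvmulE u v i : cvmul u v i 0 = u i 0 * v i 0.
Proof. by rewrite mxE. Qed.

Lemma cvinvE u i : cvinv u i 0 = (u i 0)^-1.
Proof. by rewrite mxE. Qed.

Lemma cvaddE u v i : (u + v) i 0 = u i 0 + v i 0.
Proof. by rewrite mxE. Qed.

Lemma cvsubE u v i : (u - v) i 0 = u i 0 - v i 0.
Proof. by rewrite !mxE. Qed.

Lemma cvscaleE (k : R) u i : (k *: u) i 0 = k * u i 0.
Proof. by rewrite mxE. Qed.

Lemma dg_mulmxE u v i : (dg u *m v) i 0 = u i 0 * v i 0.
Proof. by rewrite /dg mul_diag_mx !mxE. Qed.

Lemma cvmul_dg u v : cvmul u v = dg u *m v.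
Proof. by apply/matrixP => i j; rewrite (ord1 j) dg_mulmxE mxE. Qed.

Lemma dg_mulmx u v : dg u *m dg v = dg (cvmul u v).
Proof. by rewrite /dg mulmx_diag; congr diag_mx; apply/matrixP => i j; rewrite !mxE. Qed.

Lemma tr_dg u : (dg u)^T = dg u.
Proof. exact: tr_diag_mx. Qed.

Lemma cvmul_dg_mulmx u v w : cvmul u (dg v *m w) = cvmul (cvmul u v) w.
Proof. by rewrite [LHS]cvmul_dg [RHS]cvmul_dg mulmxA dg_mulmx. Qed.

End DiagonalScaling.

Section WeightedProjection.
Context {R : realType} {n d : nat} (A : 'M[R]_(d, n)) (w : 'cV[R]_n).
Hypotheses (w_pos : vpos w) (A_rank : \rank A = d).

Lemma weighted_gram_unit : A *m dg w *m A^T \in unitmx.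
Proof.
have quad_eq0 (v : 'rV[R]_n) : (v *m dg w *m v^T) 0 0 = 0 -> v = 0.
  rewrite /dg mul_mx_diag mxE => vw0.
  have term_ge0 k : 0 <= (\matrix_(i, j) (v i j * w^T 0 j)) 0 k * v^T k 0.
    by rewrite !mxE mulrAC -expr2 mulr_ge0 ?sqr_ge0 // ltW.
  apply/matrixP => i j; rewrite (ord1 i) mxE.
  have /eqP := psumr_eq0P (fun k _ => term_ge0 k) vw0 (i := j) isT.
  by rewrite !mxE mulrAC -expr2 mulf_eq0 sqrf_eq0 (gt_eqF (w_pos j)) orbF => /eqP.
rewrite -row_free_unit -kermx_eq0; apply/rowV0P => u /sub_kermxP uM.
have /eqP : u *m A = 0.
  apply: quad_eq0.
  have -> : u *m A *m dg w *m (u *m A)^T = u *m (A *m dg w *m A^T) *m u^T.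
    by rewrite trmx_mul !mulmxA.
  by rewrite uM mul0mx mxE.
by rewrite mulmx_free_eq0 /row_free ?A_rank // => /eqP.
Qed.

Lemma tr_Ptil : (Ptil A w)^T = Ptil A w.
Proof.
by rewrite /Ptil !trmx_mul trmxK trmx_inv !trmx_mul trmxK !tr_dg !mulmxA.
Qed.

Lemma Ptil_idem : Ptil A w *m Ptil A w = Ptil A w.
Proof.
set X := dg (cvsqrt w) *m A^T *m invmx (A *m dg w *m A^T).
set Y := A *m dg (cvsqrt w).
have -> : Ptil A w = X *m Y by rewrite /Ptil /X /Y !mulmxA.
have sqrt_sq : dg (cvsqrt w) *m dg (cvsqrt w) = dg w.
  rewrite dg_mulmx; congr dg; apply/matrixP => i j.
  by rewrite (ord1 j) !mxE -expr2 sqr_sqrtr // ltW.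
have YX : Y *m X = 1%:M.
  by rewrite /X /Y !mulmxA -(mulmxA A) sqrt_sq mulmxV ?weighted_gram_unit.
by rewrite mulmxA -(mulmxA X) YX mulmx1.
Qed.

End WeightedProjection.

Section PrimalDualScaling.
Context {R : realType} {n : nat} (w m : 'cV[R]_n).
Hypotheses (w_pos : vpos w) (m_pos : vpos m).

Lemma xtil_mul_stil : cvmul (xtil w m) (stil w m) = m.
Proof.
apply/matrixP => i j; rewrite (ord1 j) !mxE -sqrtrM ?mulr_ge0 ?ltW //.
have -> : w i 0 * m i 0 * (m i 0 / w i 0) = m i 0 ^+ 2.
  by field; apply: lt0r_neq0.
by rewrite sqrtr_sqr ger0_norm // ltW.
Qed.

Lemma Dhalf_E : Dhalf w m = dg (cvinv (cvsqrt m)).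
Proof. by rewrite /Dhalf xtil_mul_stil. Qed.

Lemma xtil_Dhalf : dg (xtil w m) *m Dhalf w m = dg (cvsqrt w).
Proof.
rewrite Dhalf_E dg_mulmx; congr dg; apply/matrixP => i j; rewrite !mxE.
by rewrite sqrtrM ?ltW // mulfK // sqrtr_eq0 -ltNge.
Qed.

Lemma stil_Dhalf : dg (stil w m) *m Dhalf w m = dg (cvinv (cvsqrt w)).
Proof.
rewrite Dhalf_E dg_mulmx; congr dg; apply/matrixP => i j; rewrite !mxE.
rewrite sqrtrM ?ltW // sqrtrV ?ltW // mulrAC mulfV ?mul1r //.
by rewrite sqrtr_eq0 -ltNge.
Qed.

End PrimalDualScaling.

Section FiniteProbability.
Context {R : realType} {Omega : finType} (p : Omega -> R).
Hypotheses (p_ge0 : forall w, 0 <= p w) (p_sum1 : \sum_w p w = 1).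

Lemma eq_Exv {n} (f f' : Omega -> 'cV[R]_n) : f =1 f' -> Exv p f = Exv p f'.
Proof. by move=> ff'; apply: eq_bigr => w _; rewrite ff'. Qed.

Lemma eq_Var (f f' : Omega -> R) : f =1 f' -> Var p f = Var p f'.
Proof.
move=> ff'; have Eff' : Ex p f = Ex p f' by apply: eq_bigr => w _; rewrite ff'.
by apply: eq_bigr => w _; rewrite ff' Eff'.
Qed.

Lemma Exv_cvmul {n} (a : 'cV[R]_n) (f : Omega -> 'cV[R]_n) :
  Exv p (fun w => cvmul a (f w)) = cvmul a (Exv p f).
Proof.
apply/matrixP => i j; rewrite (ord1 j) !mxE !summxE mulr_sumr.
by apply: eq_bigr => w _; rewrite !mxE mulrCA.
Qed.

Lemma Exv_subl {n} (v : 'cV[R]_n) (f : Omega -> 'cV[R]_n) :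
  Exv p (fun w => v - f w) = v - Exv p f.
Proof.
rewrite /Exv (eq_bigr (fun w => p w *: v - p w *: f w)) => [|w _]; last exact: scalerBr.
by rewrite sumrB -scaler_suml p_sum1 scale1r.
Qed.

Lemma Ex_coord {n} (f : Omega -> 'cV[R]_n) i : Ex p (fun w => f w i 0) = Exv p f i 0.
Proof. by rewrite /Ex /Exv summxE; apply: eq_bigr => w _; rewrite mxE. Qed.

Lemma Ex_affine (u a : R) (Y : Omega -> R) : Ex p (fun w => u + a * Y w) = u + a * Ex p Y.
Proof.
rewrite /Ex (eq_bigr (fun w => u * p w + a * (p w * Y w))) => [|w _]; last by ring.
by rewrite big_split /= -mulr_sumr -mulr_sumr p_sum1 mulr1.
Qed.

Lemma Var_affine_le (u a m B : R) (Y : Omega -> R) :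
  Ex p Y = m -> Ex p (fun w => Y w ^+ 2) <= m ^+ 2 + B ->
  Var p (fun w => u + a * Y w) <= a ^+ 2 * B.
Proof.
move=> EY EY2; rewrite /Var Ex_affine EY.
have -> : Ex p (fun w => (u + a * Y w - (u + a * m)) ^+ 2)
    = a ^+ 2 * (Ex p (fun w => Y w ^+ 2) - 2 * m * Ex p Y + m ^+ 2).
  rewrite /Ex (eq_bigr (fun w => a ^+ 2 * (p w * Y w ^+ 2)
        - a ^+ 2 * (2 * m) * (p w * Y w) + a ^+ 2 * m ^+ 2 * p w)) => [|w _]; last by ring.
  by rewrite !big_split /= sumrN -!mulr_sumr p_sum1; ring.
by rewrite EY ler_wpM2l ?sqr_ge0 //; lra.
Qed.

Lemma Pr_predC (P : pred Omega) : Pr p P = 1 - Pr p (predC P).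
Proof. by rewrite -p_sum1 /Pr (bigID P predT) addrK. Qed.

Lemma Pr_union_le (I : finType) (P : pred Omega) (Q : I -> pred Omega) :
  (forall w, P w -> exists i, Q i w) -> Pr p P <= \sum_i Pr p (Q i).
Proof.
move=> PQ; rewrite /Pr (exchange_big_dep predT) //=.
apply: (@le_trans _ _ (\sum_(w | P w) \sum_(i | Q i w) p w)).
  apply: ler_sum => w Pw; have [i Qi] := PQ w Pw.
  by rewrite (bigD1 i) //= lerDl sumr_ge0.
by rewrite [leRHS](bigID P) /= lerDl; apply: sumr_ge0 => w _; apply: sumr_ge0.
Qed.

End FiniteProbability.

Section StepRatio.
Context {R : realType} {n : nat} {eps t : R}.
Hypotheses (n_gt0 : (0 < n)%N) (eps_gt0 : 0 < eps) (t_gt0 : 0 < t).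

Let sqrtn_ge1 : 1 <= @Num.sqrt R n%:R.
Proof. by rewrite -[leLHS]sqrtr1; apply: ler_wsqrtr; rewrite ler1n. Qed.

Lemma tnew_ratio : tnew (n:=n) eps t / t - 1 = - (eps / (3 * Num.sqrt n%:R)).
Proof. by rewrite /tnew; field; rewrite !lt0r_neq0 // (lt_le_trans ltr01). Qed.

Lemma tnew_ratio_sqr_mul : (tnew (n:=n) eps t / t - 1) ^+ 2 * n%:R = eps ^+ 2 / 9.
Proof.
rewrite tnew_ratio sqrrN !exprMn exprVn exprMn sqr_sqrtr ?ler0n //.
by field; rewrite pnatr_eq0 -lt0n.
Qed.

Lemma tnew_ratio_abs_le : `|tnew (n:=n) eps t / t - 1| <= eps / 3.
Proof.
have sqrtn_gt0 : 0 < @Num.sqrt R n%:R := lt_le_trans ltr01 sqrtn_ge1.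
have eps3_ge0 : 0 <= eps / 3 by rewrite divr_ge0 ?ler0n // ltW.
rewrite tnew_ratio normrN invfM mulrA ger0_norm; last by rewrite mulr_ge0 // invr_ge0 ltW.
by rewrite ler_piMr // invf_le1.
Qed.

Lemma tnew_gt0 : eps < 1 -> 0 < tnew (n:=n) eps t.
Proof.
move=> eps_lt1; have := tnew_ratio_abs_le.
rewrite tnew_ratio normrN ger0_norm ?divr_ge0 ?mulr_ge0 ?sqrtr_ge0 ?(ltW eps_gt0) // => q_le.
rewrite /tnew mulr_gt0 // subr_gt0; apply: le_lt_trans q_le _; lra.
Qed.

Lemma tnew_le : tnew (n:=n) eps t <= t.
Proof.
by rewrite /tnew ger_pMl // lerBlDr lerDl divr_ge0 ?mulr_ge0 ?sqrtr_ge0 ?(ltW eps_gt0).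
Qed.

End StepRatio.

Lemma approx_divr_mulr {R : realType} {X S W e : R} : 0 < S ->
  (1 - e) * (X / S) <= W /\ W <= (1 + e) * (X / S) ->
  (1 - e) * X <= W * S /\ W * S <= (1 + e) * X.
Proof.
by move=> S0 [lb ub]; split; [move: lb | move: ub]; rewrite mulrA ?ler_pdivrMr ?ler_pdivlMr.
Qed.

Section CoordinateBounds.
Context {R : realType} {X S W U e t : R}.

Lemma xtil_rel_err : 0 < X -> 0 < S -> 0 <= e <= 1 ->
  (1 - e) * (X * S) <= U /\ U <= (1 + e) * (X * S) ->
  (1 - e) * (X / S) <= W /\ W <= (1 + e) * (X / S) ->
  `|X^-1 * (X - Num.sqrt (W * U))| <= 2 * e.
Proof.
move=> X0 S0 /andP[e0 e1] [U_lb U_ub] /(approx_divr_mulr S0) [WS_lb WS_ub].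
apply: le_trans (@sqrt_rel_err _ _ _ e X0 _ _) _; last lra.
  by apply/andP; split.
have XS_ge0 : 0 <= X * S by rewrite mulr_ge0 // ltW.
have eX_ge0 : 0 <= (1 - e) * X by rewrite mulr_ge0 ?subr_ge0 // ltW.
have eXS_ge0 : 0 <= (1 - e) * (X * S) by rewrite mulr_ge0 ?subr_ge0.
have lb := ler_pM eX_ge0 eXS_ge0 WS_lb U_lb.
have ub := ler_pM (le_trans eX_ge0 WS_lb) (le_trans eXS_ge0 U_lb) WS_ub U_ub.
by apply/andP; split; rewrite -(ler_pM2r S0); nra.
Qed.

Lemma stil_rel_err : 0 < X -> 0 < S -> 0 <= e <= 20%:R^-1 ->
  (1 - e) * (X * S) <= U /\ U <= (1 + e) * (X * S) ->
  (1 - e) * (X / S) <= W /\ W <= (1 + e) * (X / S) ->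
  `|S^-1 * (S - Num.sqrt (U / W))| <= 2 * e.
Proof.
move=> X0 S0 /andP[e0 e1] [U_lb U_ub] /(approx_divr_mulr S0) [WS_lb WS_ub].
have W0 : 0 < W by rewrite -(pmulr_lgt0 _ S0); apply: lt_le_trans WS_lb; nra.
apply: (@sqrt_rel_err _ S _ (2 * e) S0); first by apply/andP; split; lra.
have XS_ge0 : 0 <= X * S by rewrite mulr_ge0 // ltW.
apply/andP; split; [rewrite ler_pdivlMr // | rewrite ler_pdivrMr //].
  have h1 : 0 <= (1 - 2 * e) ^+ 2 * S * ((1 + e) * X - W * S).
    by rewrite mulr_ge0 ?subr_ge0 // mulr_ge0 ?sqr_ge0 // ltW.
  have h2 : 0 <= X * S * ((1 - e) - (1 - 2 * e) ^+ 2 * (1 + e)).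
    by rewrite mulr_ge0 // subr_ge0; nra.
  nra.
have h1 : 0 <= (1 + 2 * e) ^+ 2 * S * (W * S - (1 - e) * X).
  by rewrite mulr_ge0 ?subr_ge0 // mulr_ge0 ?sqr_ge0 // ltW.
have h2 : 0 <= X * S * ((1 + 2 * e) ^+ 2 * (1 - e) - (1 + e)).
  by rewrite mulr_ge0 // subr_ge0; nra.
nra.
Qed.

Lemma xscale_sqr_le : 0 < X -> 0 < S -> 0 < t -> 0 <= e <= 20%:R^-1 ->
  (1 - e) * (X / S) <= W /\ W <= (1 + e) * (X / S) ->
  (1 - 10%:R^-1) * t <= X * S ->
  (X^-1 * Num.sqrt W) ^+ 2 <= 6%:R / (5%:R * t).
Proof.
move=> X0 S0 t0 /andP[e0 e1] W_approx XS_lb.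
have [WS_lb WS_ub] := approx_divr_mulr S0 W_approx.
have W0 : 0 < W by rewrite -(pmulr_lgt0 _ S0); apply: lt_le_trans WS_lb; nra.
rewrite exprMn exprVn sqr_sqrtr ?(ltW W0) // mulrC ler_pdivrMr ?exprn_gt0 //.
rewrite mulrAC ler_pdivlMr ?mulr_gt0 // -(ler_pM2r S0).
have h1 : 0 <= 5%:R * t * ((1 + e) * X - W * S).
  by rewrite mulr_ge0 ?subr_ge0 // mulr_ge0 // ltW.
have h2 : 0 <= X * (X * S - (1 - 10%:R^-1) * t) by rewrite mulr_ge0 ?subr_ge0 // ltW.
have h3 : 0 <= X * t * (2%:R / 25%:R - e).
  by rewrite mulr_ge0 ?subr_ge0 ?mulr_ge0 ?ltW //; lra.
nra.
Qed.

Lemma sscale_sqr_le : 0 < X -> 0 < S -> 0 < t -> 0 <= e <= 20%:R^-1 ->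
  (1 - e) * (X / S) <= W /\ W <= (1 + e) * (X / S) ->
  (1 - 10%:R^-1) * t <= X * S ->
  (S^-1 * (Num.sqrt W)^-1) ^+ 2 <= 6%:R / (5%:R * t).
Proof.
move=> X0 S0 t0 /andP[e0 e1] W_approx XS_lb.
have [WS_lb WS_ub] := approx_divr_mulr S0 W_approx.
have W0 : 0 < W by rewrite -(pmulr_lgt0 _ S0); apply: lt_le_trans WS_lb; nra.
rewrite -invfM exprVn exprMn sqr_sqrtr ?(ltW W0) // -[leRHS]invf_div.
rewrite lef_pV2 ?posrE ?mulr_gt0 ?exprn_gt0 ?divr_gt0 ?invr_gt0 //.
have h1 : 0 <= S * (W * S - (1 - e) * X) by rewrite mulr_ge0 ?subr_ge0 // ltW.
have h2 : 0 <= (1 - e) * (X * S - (1 - 10%:R^-1) * t).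
  by rewrite mulr_ge0 ?subr_ge0 //; lra.
have h3 : 0 <= t * (2%:R / 27%:R - e) by rewrite mulr_ge0 ?subr_ge0 ?ltW //; lra.
nra.
Qed.

End CoordinateBounds.

Section StepCoordinateBounds.
Context {R : realType} (m U c phi e t : R).

Lemma sqr_scaled_step_le : 0 < t -> 8%:R / 9%:R * t <= U <= 10%:R / 9%:R * t ->
  ((Num.sqrt U)^-1 * (c * U + phi)) ^+ 2 <=
    20%:R / 9%:R * c ^+ 2 * t + 9%:R / 4%:R / t * phi ^+ 2.
Proof.
move=> t0 /andP[U_lb U_ub]; have U0 : 0 < U by apply: lt_le_trans U_lb; lra.
rewrite exprMn exprVn sqr_sqrtr ?(ltW U0) // -(ler_pM2r (mulr_gt0 U0 t0)).
have -> : U^-1 * (c * U + phi) ^+ 2 * (U * t) = t * (c * U + phi) ^+ 2.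
  by field; rewrite lt0r_neq0.
have -> : (20%:R / 9%:R * c ^+ 2 * t + 9%:R / 4%:R / t * phi ^+ 2) * (U * t)
    = 20%:R / 9%:R * c ^+ 2 * t * t * U + 9%:R / 4%:R * phi ^+ 2 * U.
  by field; rewrite lt0r_neq0.
have h1 : 0 <= c ^+ 2 * t * U * (10%:R / 9%:R * t - U).
  by rewrite mulr_ge0 ?subr_ge0 // mulr_ge0 ?(ltW U0) // mulr_ge0 ?sqr_ge0 ?(ltW t0).
have h2 : 0 <= phi ^+ 2 * (U - 8%:R / 9%:R * t) by rewrite mulr_ge0 ?sqr_ge0 ?subr_ge0.
have h3 : 0 <= t * (c * U - phi) ^+ 2 by rewrite mulr_ge0 ?sqr_ge0 ?(ltW t0).
nra.
Qed.

Lemma rel_diff_sqr_le : 0 < m -> (1 - e) * m <= U /\ U <= (1 + e) * m ->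
  (m^-1 * (c * U - c * m)) ^+ 2 <= c ^+ 2 * e ^+ 2.
Proof.
move=> m0 [U_lb U_ub].
have -> : m^-1 * (c * U - c * m) = c * (U / m - 1) by field; rewrite lt0r_neq0.
rewrite exprMn ler_wpM2l ?sqr_ge0 //.
have : 1 - e <= U / m by rewrite ler_pdivlMr.
have : U / m <= 1 + e by rewrite ler_pdivrMr.
nra.
Qed.

Lemma sqr_rel_step_le : 0 < t -> (1 - 10%:R^-1) * t <= m ->
  (m^-1 * (c * m + phi)) ^+ 2 <= 2 * c ^+ 2 + 200%:R / 81%:R * phi ^+ 2 / t ^+ 2.
Proof.
move=> t0 m_lb; have m0 : 0 < m by apply: lt_le_trans m_lb; rewrite mulr_gt0 //; lra.
have -> : m^-1 * (c * m + phi) = c + phi / m by field; rewrite lt0r_neq0.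
have phi_m : (phi / m) ^+ 2 <= 100%:R / 81%:R * phi ^+ 2 / t ^+ 2.
  have m_inv : m^-1 <= 10%:R / 9%:R / t.
    by rewrite -[leRHS]invf_div lef_pV2 ?posrE ?divr_gt0 //; lra.
  have -> : 100%:R / 81%:R * phi ^+ 2 / t ^+ 2 = phi ^+ 2 * (10%:R / 9%:R / t) ^+ 2.
    by field; rewrite lt0r_neq0.
  rewrite exprMn ler_wpM2l ?sqr_ge0 // ler_sqr ?nnegrE ?invr_ge0 ?(ltW m0) //.
  by rewrite !divr_ge0 ?ler0n ?(ltW t0).
have := sqr_ge0 (c - phi / m); nra.
Qed.

Lemma abs_rel_step_le : 0 < t -> (1 - 10%:R^-1) * t <= m -> 0 < U -> U <= (1 + e) * m ->
  `|m^-1 * (c * U + phi)| <= `|c| * (1 + e) + 10%:R / 9%:R * `|phi| / t.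
Proof.
move=> t0 m_lb U0 U_ub.
have m0 : 0 < m by apply: lt_le_trans m_lb; rewrite mulr_gt0 //; lra.
rewrite normrM gtr0_norm ?invr_gt0 //.
have tri : `|c * U + phi| <= `|c| * U + `|phi|.
  by apply: le_trans (ler_normD _ _) _; rewrite normrM (gtr0_norm U0).
have minv_ge0 : 0 <= m^-1 by rewrite invr_ge0 ltW.
apply: le_trans (ler_wpM2l minv_ge0 tri) _.
rewrite mulrDr; apply: lerD.
  by rewrite mulrCA ler_wpM2l // ler_pdivrMl // mulrC.
rewrite [leRHS]mulrAC ler_wpM2r //.
by rewrite -[leRHS]invf_div lef_pV2 ?posrE ?divr_gt0 //; lra.
Qed.

End StepCoordinateBounds.

Section ShortStep.
Context {R : realType} {n d b : nat} {A : 'M[R]_(d, n)} {eps epsmp lam t : R}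
  {xb sb wt mut : 'cV[R]_n} {Omega : finType} {p : Omega -> R}
  {Rm : Omega -> 'M[R]_(b, n)}.
Hypotheses (n_ge2 : (2 <= n)%N) (A_rank : \rank A = d)
  (eps_gt0 : 0 < eps) (eps_small : eps < (10000%:R)^-1)
  (epsmp_gt0 : 0 < epsmp) (epsmp_small : epsmp < (10000%:R)^-1) (t_gt0 : 0 < t)
  (xb_pos : vpos xb) (sb_pos : vpos sb) (wt_pos : vpos wt) (mut_pos : vpos mut)
  (mut_approx : approx mut epsmp (mubar xb sb))
  (wt_approx : approx wt epsmp (wbar xb sb))
  (mubar_approx : approx (mubar xb sb) (10%:R)^-1 (const_mx t))
  (grad_neq0 : gradPhi lam (rvec t mut) != 0)
  (b_large : 1000%:R * (ln (n%:R : R)) ^+ 2 <= b%:R)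
  (p_ge0 : forall w, 0 <= p w) (p_sum1 : \sum_w p w = 1)
  (sketch_mean : forall v : 'cV[R]_n, Exv p (fun w => (Rm w)^T *m Rm w *m v) = v)
  (sketch_sqr : forall (v : 'cV[R]_n) (i : 'I_n),
     Ex p (fun w => (((Rm w)^T *m Rm w *m v) i 0) ^+ 2)
       <= (v i 0) ^+ 2 + (b%:R)^-1 * norm2 v ^+ 2)
  (sketch_tail : forall (v : 'cV[R]_n) (i : 'I_n) (del : R), 0 < del < 1 ->
     Pr p (fun w => norm2 v * ln (n%:R / del) / Num.sqrt b%:R
                      < `|((Rm w)^T *m Rm w *m v) i 0 - v i 0|) <= del).

Local Notation c := (tnew (n:=n) eps t / t - 1).
Local Notation phi := (dtil_Phi eps lam t mut).
Local Notation g := (Dhalf wt mut *m dtil_mu eps lam t mut).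
Local Notation Pg := (Ptil A wt *m g).
Local Notation sketch M := (M^T *m M *m Pg).
Local Notation xscale := (cvmul (cvinv xb) (cvsqrt wt)).
Local Notation sscale := (cvmul (cvinv sb) (cvinv (cvsqrt wt))).
Local Notation kappa := (6%:R / (5%:R * t)).

Let eps_ge0 : 0 <= eps. Proof. exact: ltW. Qed.

Let eps_lt1 : eps < 1.
Proof. by apply: lt_trans eps_small _; rewrite invf_lt1 ?ltr1n. Qed.

Let epsmp_le k : (0 < k <= 10000)%N -> 0 <= epsmp <= k%:R^-1.
Proof.
case/andP=> k_gt0 k_le; apply/andP; split; first exact: ltW.
apply: ltW (lt_le_trans epsmp_small _).
by rewrite lef_pV2 ?posrE ?ltr0n ?ler_nat.
Qed.

Let mubar_coord i : (1 - 10%:R^-1) * t <= xb i 0 * sb i 0 <= (1 + 10%:R^-1) * t.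
Proof. by have [] := mubar_approx i; rewrite !mxE => -> ->. Qed.

Let mut_coord i : (1 - epsmp) * (xb i 0 * sb i 0) <= mut i 0 /\
  mut i 0 <= (1 + epsmp) * (xb i 0 * sb i 0).
Proof. by have := mut_approx i; rewrite !mxE. Qed.

Let wt_coord i : (1 - epsmp) * (xb i 0 / sb i 0) <= wt i 0 /\
  wt i 0 <= (1 + epsmp) * (xb i 0 / sb i 0).
Proof. by have := wt_approx i; rewrite !mxE. Qed.

Let mut_bounds i : 8%:R / 9%:R * t <= mut i 0 <= 10%:R / 9%:R * t.
Proof.
have [U_lb U_ub] := mut_coord i; have /andP[m_lb m_ub] := mubar_coord i.
have /andP[e0 e1] := epsmp_le 100 isT; have t0 := t_gt0.
have h1 : 0 <= (1 - epsmp) * (xb i 0 * sb i 0 - (1 - 10%:R^-1) * t).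
  by rewrite mulr_ge0 ?subr_ge0 //; lra.
have h2 : 0 <= (1 + epsmp) * ((1 + 10%:R^-1) * t - xb i 0 * sb i 0).
  by rewrite mulr_ge0 ?subr_ge0 //; lra.
by apply/andP; split; nra.
Qed.

Let n_gt0 : (0 < n)%N. Proof. exact: ltnW. Qed.

Let tnew_bounds : 0 < tnew (n:=n) eps t <= t.
Proof. by rewrite tnew_gt0 ?tnew_le. Qed.

Lemma sqnorm_phi_le : sqnorm phi <= (eps / 2 * t) ^+ 2.
Proof.
have /andP[tn0 tn_le] := tnew_bounds.
rewrite sqnorm_normalize // ler_sqr ?nnegrE; last 2 first.
- by rewrite mulr_ge0 ?divr_ge0 // ltW.
- by rewrite mulr_ge0 ?divr_ge0 // ltW.
by rewrite ler_wpM2l ?divr_ge0.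
Qed.

Lemma g_coord i : g i 0 = (Num.sqrt (mut i 0))^-1 * (c * mut i 0 + phi i 0).
Proof. by rewrite Dhalf_E // dg_mulmxE !mxE. Qed.

Lemma sqnorm_g_le : sqnorm g <= 81%:R / 100%:R * eps ^+ 2 * t.
Proof.
have g_le i : (g i 0) ^+ 2 <= 20%:R / 9%:R * c ^+ 2 * t + 9%:R / 4%:R / t * (phi i 0) ^+ 2.
  by rewrite g_coord; apply: sqr_scaled_step_le => //; apply: mut_bounds.
apply: le_trans (sqnorm_le_sum g_le) _.
have -> : n%:R * (20%:R / 9%:R * c ^+ 2 * t) = 20%:R / 9%:R * t * (c ^+ 2 * n%:R) by ring.
rewrite tnew_ratio_sqr_mul //.
have c94_ge0 : 0 <= 9%:R / 4%:R / t by rewrite !divr_ge0 ?ler0n // ltW.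
have := ler_wpM2l c94_ge0 sqnorm_phi_le.
have -> : 9%:R / 4%:R / t * (eps / 2 * t) ^+ 2 = 9%:R / 16%:R * eps ^+ 2 * t.
  by field; rewrite lt0r_neq0.
have := mulr_ge0 (sqr_ge0 eps) (ltW t_gt0); lra.
Qed.

Let kappa_ge0 : 0 <= kappa.
Proof. by rewrite divr_ge0 ?mulr_ge0 ?ler0n // ltW. Qed.

Lemma kappa_sqnorm_g_le : kappa * sqnorm g <= eps ^+ 2.
Proof.
apply: le_trans (ler_wpM2l kappa_ge0 sqnorm_g_le) _.
have -> : kappa * (81%:R / 100%:R * eps ^+ 2 * t) = 486%:R / 500%:R * eps ^+ 2.
  by field; rewrite lt0r_neq0.
have := sqr_ge0 eps; lra.
Qed.

Lemma xscale_le_kappa i : (xscale i 0) ^+ 2 <= kappa.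
Proof.
have /andP[m_lb _] := mubar_coord i; have W_approx := wt_coord i.
by rewrite !mxE; apply: (xscale_sqr_le (S := sb i 0) (e := epsmp)); rewrite ?epsmp_le.
Qed.

Lemma sscale_le_kappa i : (sscale i 0) ^+ 2 <= kappa.
Proof.
have /andP[m_lb _] := mubar_coord i; have W_approx := wt_coord i.
by rewrite !mxE; apply: (sscale_sqr_le (X := xb i 0) (e := epsmp)); rewrite ?epsmp_le.
Qed.

Let eps_le2 : eps <= 2 * eps.
Proof. by have := eps_gt0; lra. Qed.

Let sqnorm_Pg_le : sqnorm Pg <= sqnorm g.
Proof. by case: (sqnorm_proj_le _ g (tr_Ptil A wt) (Ptil_idem A wt wt_pos A_rank)). Qed.

Let sqnorm_g_Pg_le : sqnorm (g - Pg) <= sqnorm g.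
Proof. by case: (sqnorm_proj_le _ g (tr_Ptil A wt) (Ptil_idem A wt wt_pos A_rank)). Qed.

Lemma dtil_x_scaled : cvmul (cvinv xb) (dtil_x A eps lam t wt mut) = cvmul xscale (g - Pg).
Proof.
have -> : dtil_x A eps lam t wt mut = dg (xtil wt mut) *m Dhalf wt mut *m (g - Pg).
  by rewrite /dtil_x !mulmxBr !mulmxBl ?mulmx1 ?mul1mx !mulmxA.
by rewrite xtil_Dhalf // cvmul_dg_mulmx.
Qed.

Lemma dtil_s_scaled : cvmul (cvinv sb) (dtil_s A eps lam t wt mut) = cvmul sscale Pg.
Proof.
have -> : dtil_s A eps lam t wt mut = dg (stil wt mut) *m Dhalf wt mut *m Pg.
  by rewrite /dtil_s !mulmxA.
by rewrite stil_Dhalf // cvmul_dg_mulmx.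
Qed.

Lemma dhat_x_scaled (M : 'M[R]_(b, n)) :
  cvmul (cvinv xb) (dhat_x A eps lam t wt mut M) = cvmul xscale (g - sketch M).
Proof.
have -> : dhat_x A eps lam t wt mut M = dg (xtil wt mut) *m Dhalf wt mut *m (g - sketch M).
  by rewrite /dhat_x !mulmxBr !mulmxBl ?mulmx1 ?mul1mx !mulmxA.
by rewrite xtil_Dhalf // cvmul_dg_mulmx.
Qed.

Lemma dhat_s_scaled (M : 'M[R]_(b, n)) :
  cvmul (cvinv sb) (dhat_s A eps lam t wt mut M) = cvmul sscale (sketch M).
Proof.
have -> : dhat_s A eps lam t wt mut M = dg (stil wt mut) *m Dhalf wt mut *m sketch M.
  by rewrite /dhat_s !mulmxA.
by rewrite stil_Dhalf // cvmul_dg_mulmx.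
Qed.

Lemma dtil_x_norm2_le : norm2 (cvmul (cvinv xb) (dtil_x A eps lam t wt mut)) <= 2 * eps.
Proof.
rewrite dtil_x_scaled; apply: le_trans eps_le2.
exact: (norm2_cvmul_le xscale_le_kappa kappa_ge0 kappa_sqnorm_g_le eps_ge0 sqnorm_g_Pg_le).
Qed.

Lemma dtil_s_norm2_le : norm2 (cvmul (cvinv sb) (dtil_s A eps lam t wt mut)) <= 2 * eps.
Proof.
rewrite dtil_s_scaled; apply: le_trans eps_le2.
exact: (norm2_cvmul_le sscale_le_kappa kappa_ge0 kappa_sqnorm_g_le eps_ge0 sqnorm_Pg_le).
Qed.

Lemma Exv_dhat_x : Exv p (fun w => cvmul (cvinv xb) (dhat_x A eps lam t wt mut (Rm w)))
  = cvmul (cvinv xb) (dtil_x A eps lam t wt mut).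
Proof.
rewrite (eq_Exv p _ (fun w => cvmul xscale (g - sketch (Rm w)))) => [|w]; last first.
  exact: dhat_x_scaled.
by rewrite Exv_cvmul Exv_subl // sketch_mean dtil_x_scaled.
Qed.

Lemma Exv_dhat_s : Exv p (fun w => cvmul (cvinv sb) (dhat_s A eps lam t wt mut (Rm w)))
  = cvmul (cvinv sb) (dtil_s A eps lam t wt mut).
Proof.
rewrite (eq_Exv p _ (fun w => cvmul sscale (sketch (Rm w)))) => [|w]; last first.
  exact: dhat_s_scaled.
by rewrite Exv_cvmul sketch_mean dtil_s_scaled.
Qed.

Lemma dtil_t_err_norm2_le :
  norm2 (cvmul (cvinv (mubar xb sb)) (dtil_t eps t mut - dbar_t eps t xb sb)) <= epsmp * eps.
Proof.
apply: norm2_le; first by rewrite mulr_ge0 // ltW.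
have coord_le i :
    (cvmul (cvinv (mubar xb sb)) (dtil_t eps t mut - dbar_t eps t xb sb) i 0) ^+ 2
      <= c ^+ 2 * epsmp ^+ 2.
  rewrite /dbar_t /dtil_t /mubar !mxE.
  by apply: rel_diff_sqr_le; [rewrite mulr_gt0 | exact: mut_coord].
apply: le_trans (sqnorm_le_const coord_le) _.
rewrite mulrA [n%:R * _]mulrC tnew_ratio_sqr_mul // exprMn.
have := mulr_ge0 (sqr_ge0 eps) (sqr_ge0 epsmp); lra.
Qed.

Lemma dbar_t_Phi_norm2_le :
  norm2 (cvmul (cvinv (mubar xb sb)) (dbar_t eps t xb sb + phi)) <= 5 * eps.
Proof.
apply: norm2_le; first by rewrite mulr_ge0 // ltW.
have coord_le i : (cvmul (cvinv (mubar xb sb)) (dbar_t eps t xb sb + phi) i 0) ^+ 2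
    <= 2 * c ^+ 2 + 200%:R / 81%:R / t ^+ 2 * (phi i 0) ^+ 2.
  rewrite cvmulE cvinvE cvaddE /dbar_t /mubar cvscaleE !cvmulE.
  rewrite [X in _ <= _ + X]mulrAC.
  by apply: sqr_rel_step_le => //; case/andP: (mubar_coord i).
apply: le_trans (sqnorm_le_sum coord_le) _.
have -> : n%:R * (2 * c ^+ 2) = 2 * (c ^+ 2 * n%:R) by ring.
rewrite tnew_ratio_sqr_mul //.
have c_ge0 : 0 <= 200%:R / 81%:R / t ^+ 2 by rewrite !divr_ge0 ?ler0n ?sqr_ge0.
have := ler_wpM2l c_ge0 sqnorm_phi_le.
have -> : 200%:R / 81%:R / t ^+ 2 * (eps / 2 * t) ^+ 2 = 50%:R / 81%:R * eps ^+ 2.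
  by field; rewrite lt0r_neq0.
have := sqr_ge0 eps; lra.
Qed.

Let abs_phi_le i : `|phi i 0| <= eps / 2 * t.
Proof.
apply: abs_le_of_sqr_le; first by rewrite mulr_ge0 ?divr_ge0 // ltW.
exact: le_trans (sqr_coord_le_sqnorm phi i) sqnorm_phi_le.
Qed.

Lemma xtil_err_norminf_le : norminf (cvmul (cvinv xb) (xb - xtil wt mut)) <= 2 * epsmp.
Proof.
apply: norminf_le => [|i]; first by rewrite mulr_ge0 // ltW.
have e_le1 : 0 <= epsmp <= 1 by have := epsmp_le 1 isT; rewrite mulr1n invr1.
have [U_approx W_approx] := (mut_coord i, wt_coord i).
by rewrite !mxE; apply: (xtil_rel_err (S := sb i 0)).
Qed.

Lemma stil_err_norminf_le : norminf (cvmul (cvinv sb) (sb - stil wt mut)) <= 2 * epsmp.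
Proof.
apply: norminf_le => [|i]; first by rewrite mulr_ge0 // ltW.
have [U_approx W_approx] := (mut_coord i, wt_coord i).
by rewrite !mxE; apply: (stil_rel_err (X := xb i 0)); rewrite ?epsmp_le.
Qed.

Lemma dtil_x_norminf_le : norminf (cvmul (cvinv xb) (dtil_x A eps lam t wt mut)) <= 2 * eps.
Proof.
apply: norminf_le => [|i]; first by rewrite mulr_ge0 // ltW.
rewrite dtil_x_scaled cvmulE; apply: le_trans eps_le2.
exact: (abs_scale_coord_le xscale_le_kappa kappa_sqnorm_g_le eps_ge0 i sqnorm_g_Pg_le).
Qed.

Lemma dtil_s_norminf_le : norminf (cvmul (cvinv sb) (dtil_s A eps lam t wt mut)) <= 2 * eps.
Proof.
apply: norminf_le => [|i]; first by rewrite mulr_ge0 // ltW.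
rewrite dtil_s_scaled cvmulE; apply: le_trans eps_le2.
exact: (abs_scale_coord_le sscale_le_kappa kappa_sqnorm_g_le eps_ge0 i sqnorm_Pg_le).
Qed.

Lemma dtil_mu_norminf_le :
  norminf (cvmul (cvinv (mubar xb sb)) (dtil_mu eps lam t mut)) <= 5 * eps.
Proof.
apply: norminf_le => [|i]; first by rewrite mulr_ge0 // ltW.
rewrite cvmulE cvinvE cvaddE /dtil_t /mubar cvscaleE cvmulE.
have /andP[m_lb _] := mubar_coord i; have [_ U_ub] := mut_coord i.
apply: le_trans (abs_rel_step_le _ _ _ _ _ _ t_gt0 m_lb (mut_pos i) U_ub) _.
have c_le := tnew_ratio_abs_le n_gt0 eps_gt0 t_gt0.
have /andP[e0 e1] := epsmp_le 1 isT; rewrite mulr1n invr1 in e1.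
have phi_t : `|phi i 0| / t <= eps / 2 by rewrite ler_pdivrMr ?abs_phi_le.
have c_e : `|tnew (n:=n) eps t / t - 1| * (1 + epsmp) <= eps / 3 * 2.
  by rewrite ler_pM ?addr_ge0 //; lra.
have := eps_gt0; rewrite -mulrA; lra.
Qed.

Let binv_ge0 : 0 <= (b%:R : R)^-1.
Proof. by rewrite invr_ge0 ler0n. Qed.

Let Ex_sketch i : Ex p (fun w => sketch (Rm w) i 0) = Pg i 0.
Proof. by rewrite (Ex_coord p (fun w => sketch (Rm w))) sketch_mean. Qed.

Let Ex_sketch_sqr i :
  Ex p (fun w => (sketch (Rm w) i 0) ^+ 2) <= Pg i 0 ^+ 2 + (b%:R)^-1 * sqnorm Pg.
Proof. by rewrite -norm2_sqr sketch_sqr. Qed.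

Lemma Var_dhat_x_le i :
  Var p (fun w => (dhat_x A eps lam t wt mut (Rm w)) i 0 / xb i 0) <= 2 * eps ^+ 2 / b%:R.
Proof.
rewrite (eq_Var p _ (fun w => xscale i 0 * g i 0 + (- xscale i 0) * sketch (Rm w) i 0));
  last by move=> w; rewrite mulrC -cvinvE -cvmulE dhat_x_scaled cvmulE cvsubE; ring.
apply: le_trans (Var_affine_le p p_sum1 _ _ _ _ _ (Ex_sketch i) (Ex_sketch_sqr i)) _.
have := scale_sqnorm_le xscale_le_kappa kappa_sqnorm_g_le i sqnorm_Pg_le.
rewrite sqrrN mulrCA => scaled_le; apply: le_trans (ler_wpM2l binv_ge0 scaled_le) _.
have := mulr_ge0 binv_ge0 (sqr_ge0 eps); lra.
Qed.

Lemma Var_dhat_s_le i :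
  Var p (fun w => (dhat_s A eps lam t wt mut (Rm w)) i 0 / sb i 0) <= 2 * eps ^+ 2 / b%:R.
Proof.
rewrite (eq_Var p _ (fun w => 0 + sscale i 0 * sketch (Rm w) i 0));
  last by move=> w; rewrite mulrC -cvinvE -cvmulE dhat_s_scaled cvmulE add0r.
apply: le_trans (Var_affine_le p p_sum1 _ _ _ _ _ (Ex_sketch i) (Ex_sketch_sqr i)) _.
have := scale_sqnorm_le sscale_le_kappa kappa_sqnorm_g_le i sqnorm_Pg_le.
rewrite mulrCA => scaled_le; apply: le_trans (ler_wpM2l binv_ge0 scaled_le) _.
have := mulr_ge0 binv_ge0 (sqr_ge0 eps); lra.
Qed.

Let tail_width_le :
  norm2 Pg * ln (n%:R / (n%:R ^+ 5)^-1) / Num.sqrt b%:R <= norm2 Pg.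
Proof.
have ln_gt0 : 0 < ln (n%:R : R) by rewrite ln_gt0 // ltr1n.
have -> : ln (n%:R / (n%:R ^+ 5)^-1) = 6 * ln (n%:R : R).
  by rewrite invrK -exprS lnXn ?ltr0n // mulrC mulr_natr.
have b_gt0 : (0 : R) < b%:R.
  by apply: lt_le_trans b_large; rewrite mulr_gt0 ?exprn_gt0.
rewrite -mulrA ler_piMr ?sqrtr_ge0 // ler_pdivrMr ?sqrtr_gt0 // mul1r.
rewrite -[leLHS]ger0_norm ?mulr_ge0 ?ler0n ?(ltW ln_gt0) // -sqrtr_sqr ler_wsqrtr //.
apply: le_trans b_large; rewrite exprMn ler_wpM2r ?sqr_ge0 //.
by rewrite -natrX ler_nat.
Qed.

Lemma dhat_norminf_le_of_sketch_close (M : 'M[R]_(b, n)) :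
  (forall i, `|sketch M i 0 - Pg i 0| <= norm2 Pg) ->
  (norminf (cvmul (cvinv xb) (dhat_x A eps lam t wt mut M)) <= 3 * eps)
  && (norminf (cvmul (cvinv sb) (dhat_s A eps lam t wt mut M)) <= 3 * eps).
Proof.
move=> close; have eps3 : eps + eps <= 3 * eps by have := eps_gt0; lra.
have eps3_ge0 : 0 <= 3 * eps by rewrite mulr_ge0 // ltW.
apply/andP; split; apply: norminf_le => // i; apply: le_trans eps3.
  rewrite dhat_x_scaled cvmulE cvsubE.
  apply: (abs_mulr_perturb_le (x := g i 0 - Pg i 0) (T := norm2 Pg)).
  - rewrite -cvsubE.
    exact: (abs_scale_coord_le xscale_le_kappa kappa_sqnorm_g_le eps_ge0 i sqnorm_g_Pg_le).
  - have -> : g i 0 - sketch M i 0 - (g i 0 - Pg i 0) = - (sketch M i 0 - Pg i 0) by ring.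
    by rewrite normrN close.
  exact: (abs_scale_norm2_le xscale_le_kappa kappa_sqnorm_g_le eps_ge0 i sqnorm_Pg_le).
rewrite dhat_s_scaled cvmulE; apply: (abs_mulr_perturb_le (x := Pg i 0)) (close i) _.
  exact: (abs_scale_coord_le sscale_le_kappa kappa_sqnorm_g_le eps_ge0 i sqnorm_Pg_le).
exact: (abs_scale_norm2_le sscale_le_kappa kappa_sqnorm_g_le eps_ge0 i sqnorm_Pg_le).
Qed.

Lemma dhat_norminf_le_whp : 1 - (n%:R ^+ 4)^-1 <=
  Pr p (fun w =>
    (norminf (cvmul (cvinv xb) (dhat_x A eps lam t wt mut (Rm w))) <= 3 * eps)
    && (norminf (cvmul (cvinv sb) (dhat_s A eps lam t wt mut (Rm w))) <= 3 * eps)).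
Proof.
set good := fun w => _ && _.
pose del : R := (n%:R ^+ 5)^-1.
have n_gt0R : (0 : R) < n%:R by rewrite ltr0n.
have del01 : 0 < del < 1.
  by rewrite invr_gt0 exprn_gt0 //= invf_lt1 ?exprn_gt0 // exprn_egt1 // ltr1n.
pose far i w := norm2 Pg * ln (n%:R / del) / Num.sqrt b%:R < `|sketch (Rm w) i 0 - Pg i 0|.
have bad_far w : predC good w -> exists i, far i w.
  move=> /negP bad; case: (pickP (fun i => far i w)) => [i far_i | near]; first by exists i.
  case: bad; apply: dhat_norminf_le_of_sketch_close => i.
  by apply: le_trans tail_width_le; rewrite leNgt; exact: negbT (near i).
rewrite (Pr_predC p p_sum1) lerD2l lerN2.
apply: le_trans (Pr_union_le p p_ge0 _ _ far bad_far) _.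
apply: le_trans (_ : _ <= \sum_(i < n) del) _.
  by apply: ler_sum => i _; apply: sketch_tail.
rewrite sumr_const card_ord -[del *+ n]mulr_natl /del exprS invfM mulrA.
by rewrite mulfV ?mul1r // lt0r_neq0.
Qed.

End ShortStep.


Theorem lemmaB16 (R : realType) (n d b : nat) (A : 'M[R]_(d, n))
  (eps epsmp lam t : R) (xb sb wt mut : 'cV[R]_n)
  (Omega : finType) (p : Omega -> R) (Rm : Omega -> 'M[R]_(b, n)) :
  (2 <= n)%N -> (d <= n)%N -> \rank A = d ->
  0 < eps < (10000%:R)^-1 -> 0 < epsmp < (10000%:R)^-1 ->
  ln (n%:R : R) < lam -> 0 < t ->
  vpos xb -> vpos sb -> vpos wt -> vpos mut ->
  approx mut epsmp (mubar xb sb) -> approx wt epsmp (wbar xb sb) ->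
  approx (mubar xb sb) (10%:R)^-1 (const_mx t) ->
  gradPhi lam (rvec t mut) != 0 ->
  1000%:R * (ln (n%:R : R)) ^+ 2 <= b%:R ->
  (* R is a random matrix: a finite probability distribution p on Omega *)
  (forall w, 0 <= p w) -> \sum_w p w = 1 ->
  (* the stated properties of the subsampled randomized Hadamard transform *)
  (forall h : 'cV[R]_n, Exv p (fun w => (Rm w)^T *m Rm w *m h) = h) ->
  (forall (h : 'cV[R]_n) (i : 'I_n),
     Ex p (fun w => (((Rm w)^T *m Rm w *m h) i 0) ^+ 2)
       <= (h i 0) ^+ 2 + (b%:R)^-1 * norm2 h ^+ 2) ->
  (forall (h : 'cV[R]_n) (i : 'I_n) (del : R), 0 < del < 1 ->
     Pr p (fun w => norm2 h * ln (n%:R / del) / Num.sqrt b%:R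
                      < `|((Rm w)^T *m Rm w *m h) i 0 - h i 0|) <= del) ->
  (* 1. *)
  (norm2 (cvmul (cvinv sb) (dtil_s A eps lam t wt mut)) <= 2 * eps /\
    norm2 (cvmul (cvinv xb) (dtil_x A eps lam t wt mut)) <= 2 * eps) /\
  [/\
      norm2 (Exv p (fun w => cvmul (cvinv sb) (dhat_s A eps lam t wt mut (Rm w)))) <= 2 * eps,
      norm2 (Exv p (fun w => cvmul (cvinv xb) (dhat_x A eps lam t wt mut (Rm w)))) <= 2 * eps,
      norm2 (cvmul (cvinv (mubar xb sb)) (dtil_t eps t mut - dbar_t eps t xb sb))
        <= epsmp * eps &
      norm2 (cvmul (cvinv (mubar xb sb)) (dbar_t eps t xb sb + dtil_Phi eps lam t mut))
        <= 5 * eps]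
  /\
  (* 2. *)
  (forall i : 'I_n,
     Var p (fun w => (dhat_x A eps lam t wt mut (Rm w)) i 0 / xb i 0) <= 2 * eps ^+ 2 / b%:R
     /\ Var p (fun w => (dhat_s A eps lam t wt mut (Rm w)) i 0 / sb i 0) <= 2 * eps ^+ 2 / b%:R)
  /\
  (* 3. *)
  [/\ norminf (cvmul (cvinv xb) (xb - xtil wt mut)) <= 2 * epsmp,
      norminf (cvmul (cvinv sb) (sb - stil wt mut)) <= 2 * epsmp,
      norminf (cvmul (cvinv xb) (dtil_x A eps lam t wt mut)) <= 2 * eps,
      norminf (cvmul (cvinv sb) (dtil_s A eps lam t wt mut)) <= 2 * eps &
      norminf (cvmul (cvinv (mubar xb sb)) (dtil_mu eps lam t mut)) <= 5 * eps]
  /\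
  (* 4. *)
  1 - (n%:R ^+ 4)^-1 <=
    Pr p (fun w =>
      (norminf (cvmul (cvinv xb) (dhat_x A eps lam t wt mut (Rm w))) <= 3 * eps)
      && (norminf (cvmul (cvinv sb) (dhat_s A eps lam t wt mut (Rm w))) <= 3 * eps)).
Proof.
(* [d <= n] follows from the rank condition, and [lam] only enters through the
   direction of delta_Phi, whose length is fixed. *)
move=> n_ge2 _ A_rank /andP[eps_gt0 eps_small] /andP[epsmp_gt0 epsmp_small] _ t_gt0
  xb_pos sb_pos wt_pos mut_pos mut_approx wt_approx mubar_approx grad_neq0 b_large
  p_ge0 p_sum1 sketch_mean sketch_sqr sketch_tail.
(* Section parameters occurring only in hypotheses are passed by name. *)
split.
  split; first exact: (dtil_s_norm2_le (epsmp := epsmp) (xb := xb)).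
  exact: (dtil_x_norm2_le (epsmp := epsmp) (sb := sb)).
split.
  split; [rewrite Exv_dhat_s // | rewrite Exv_dhat_x // |
          exact: dtil_t_err_norm2_le | exact: dbar_t_Phi_norm2_le].
    exact: (dtil_s_norm2_le (epsmp := epsmp) (xb := xb)).
  exact: (dtil_x_norm2_le (epsmp := epsmp) (sb := sb)).
split.
  move=> i; split; first exact: (Var_dhat_x_le (epsmp := epsmp) (sb := sb)).
  exact: (Var_dhat_s_le (epsmp := epsmp) (xb := xb)).
split; last exact: (dhat_norminf_le_whp (epsmp := epsmp)).
split.
- exact: (xtil_err_norminf_le (sb := sb)).
- exact: (stil_err_norminf_le (xb := xb)).
- exact: (dtil_x_norminf_le (epsmp := epsmp) (sb := sb)).
- exact: (dtil_s_norminf_le (epsmp := epsmp) (xb := xb)).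
- exact: (dtil_mu_norminf_le (epsmp := epsmp)).
Qed.
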